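(* Let $X$ be a hereditarily meta-Lindelöf, compact, scattered space with countable scattered height. If $X$ has a $P$-base for some directed set $P$ with calibre $(\omega_1,\omega)$, then $X$ is countable, hence metrizable.
   Context: All spaces are Tychonoff. $X$ is hereditarily meta-Lindelöf if every open cover of any subspace has a point-countable open refinement. $X$ is scattered if every nonempty subspace has an isolated point; for $A\subseteq X$ let $A'$ be the set of non-isolated points of $A$, set $X^{(0)}=X$, $X^{(\alpha)}=\bigcap_{\beta<\alpha}(X^{(\beta)})'$ for $\alpha>0$; for $x\in X$, $h(x)$ is the ordinal with $x\in X^{(h(x))}\setminus X^{(h(x)+1)}$, and the scattered height is $h(X)=\sup\{h(x):x\in X\}$. A $P$-base is an assignment to each $x\in X$ of a neighborhood base $\{U_p:p\in P\}$ at $x$ with $U_p\subseteq U_{p'}$ whenever $p\ge p'$. A directed set has calibre $(\omega_1,\omega)$ if every uncountable subset contains an infinite subset with an upper bound. *)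

From HB Require Import structures.
From mathcomp Require Import all_boot all_order all_algebra.
From mathcomp Require Import all_classical all_reals all_analysis.
From mathcomp Require Import Rstruct Rstruct_topology.
From Stdlib Require Import Reals.
Set Implicit Arguments. Unset Strict Implicit. Unset Printing Implicit Defensive.
Import Order.TTheory GRing.Theory Num.Theory.
Local Open Scope classical_set_scope.

Definition completely_regular (X : topologicalType) : Prop :=
  forall (A : set X) (x : X), closed A -> ~ A x ->
    exists f : X -> Rdefinitions.R,
      continuous f /\ f x = 0%R /\ (forall y, A y -> f y = 1%R).

Definition tychonoff_space (X : topologicalType) : Prop :=
  hausdorff_space X /\ completely_regular X.

Definition open_in {X : topologicalType} (Y V : set X) : Prop :=
  exists W : set X, open W /\ V = W `&` Y.

Definition hered_meta_lindelof (X : topologicalType) : Prop :=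
  forall (Y : set X) (U : set (set X)),
    (forall u, U u -> open_in Y u) -> \bigcup_(u in U) u = Y ->
    exists V : set (set X),
      (forall v, V v -> open_in Y v) /\
      \bigcup_(v in V) v = Y /\
      (forall v, V v -> exists2 u, U u & v `<=` u) /\
      (forall y, Y y -> countable [set v | V v /\ v y]).

Definition isolated_in {X : topologicalType} (A : set X) (x : X) : Prop :=
  A x /\ exists U : set X, open U /\ U `&` A = [set x].

Definition scattered (X : topologicalType) : Prop :=
  forall A : set X, A !=set0 -> exists x, isolated_in A x.

Definition derived {X : topologicalType} (A : set X) : set X :=
  [set x | A x /\ ~ isolated_in A x].

Definition well_order {W : Type} (lt : W -> W -> Prop) : Prop :=
  well_founded lt /\
  (forall a b c, lt a b -> lt b c -> lt a c) /\
  (forall a b, lt a b \/ a = b \/ lt b a).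

(* By well-founded recursion, D w = X^(alpha) where alpha is the order type
   of the initial segment below w. *)
Definition CB_hierarchy {X : topologicalType} {W : Type}
    (lt : W -> W -> Prop) (D : W -> set X) : Prop :=
  forall w, D w = \bigcap_(v in [set v | lt v w]) derived (D v).

(* X has countable scattered height: there is a countable ordinal alpha
   (represented by a countable well-order W) such that every point x has
   h(x) < alpha, i.e. x leaves the hierarchy before alpha. *)
Definition countable_height (X : topologicalType) : Prop :=
  exists (W : Type) (lt : W -> W -> Prop) (D : W -> set X),
    well_order lt /\ countable [set: W] /\ CB_hierarchy lt D /\
    (forall x : X, exists w, ~ D w x).

Definition directed_set {P : Type} (le : P -> P -> Prop) : Prop :=
  (forall p, le p p) /\
  (forall p q r, le p q -> le q r -> le p r) /\
  (forall p q, exists r, le p r /\ le q r).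

Definition calibre_w1_w {P : Type} (le : P -> P -> Prop) : Prop :=
  forall S : set P, ~ countable S ->
    exists T : set P, T `<=` S /\ infinite_set T /\
      exists p, forall t, T t -> le t p.

Definition has_Pbase (X : topologicalType) {P : Type}
    (le : P -> P -> Prop) : Prop :=
  exists U : X -> P -> set X,
    forall x : X,
      (forall p, nbhs x (U x p)) /\
      (forall N, nbhs x N -> exists p, U x p `<=` N) /\
      (forall p p', le p' p -> U x p `<=` U x p').

Definition metrizable_space (X : topologicalType) : Prop :=
  exists d : X -> X -> Rdefinitions.R,
    (forall x y, (0 <= d x y)%R) /\
    (forall x y, d x y = 0%R <-> x = y) /\
    (forall x y, d x y = d y x) /\
    (forall x y z, (d x z <= d x y + d y z)%R) /\
    (forall A : set X, open A <->
       forall x, A x -> exists e : Rdefinitions.R, (0 < e)%R /\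
         [set y | (d x y < e)%R] `<=` A).

From mathcomp Require Import all_boot all_order all_algebra.
From mathcomp Require Import all_classical all_reals all_analysis.
From mathcomp Require Import Rstruct Rstruct_topology.
From HB Require Import structures.
Import Order.TTheory GRing.Theory Num.Theory.
Local Open Scope classical_set_scope.
Set Implicit Arguments. Unset Strict Implicit. Unset Printing Implicit Defensive.

(* Every point has a countable open neighbourhood.  Otherwise, by scatteredness,
   some point x is isolated among the bad points, and by regularity it has a
   closed neighbourhood K whose other points are all good.  Hereditary
   meta-Lindelöfness splits K \ {x} into the chain components of a
   point-countable cover by countable open sets; these are countable and
   relatively open, so a compact set missing x meets only finitely many of
   them.  Each component escapes some member of the P-base at x, and calibre
   (omega_1, omega) then allows only countably many components: K is countable.
   Compactness now makes X countable.  A continuous real function separating two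
   points then omits a value of (0, 1), which yields a separating sequence of
   clopen sets; the first index separating two points defines a compatible
   ultrametric. *)

Lemma countable_subset T (A B : set T) : A `<=` B -> countable B -> countable A.
Proof. by move=> /subset_card_le; apply: sub_countable. Qed.

Lemma countableU T (A B : set T) : countable A -> countable B -> countable (A `|` B).
Proof.
move=> cA cB; have -> : A `|` B = \bigcup_(b in [set: bool]) (if b then A else B).
  by apply/seteqP; split=> [z [Az|Bz]|z [[] _ ?]];
    [exists true | exists false | left | right].
by apply: bigcup_countable; [exact: countableP | case].
Qed.

Section ChainComponent.
Variables (T : Type) (V : set (set T)).

Fixpoint chain_ball (y : T) (n : nat) : set T :=
  if n is n'.+1 then
    chain_ball y n' `|` \bigcup_(v in [set v | V v /\ v `&` chain_ball y n' !=set0]) v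
  else [set y].

Definition chain_component (y : T) : set T := \bigcup_(n in [set: nat]) chain_ball y n.

Lemma chain_component_refl y : chain_component y y.
Proof. by exists 0%N. Qed.

Lemma chain_component_link y v z :
  V v -> v z -> chain_component y z -> v `<=` chain_component y.
Proof.
move=> Vv vz [n _ yz] w vw; exists n.+1 => //; right.
by exists v => //; split=> //; exists z.
Qed.

Lemma chain_component_trans y z :
  chain_component y z -> chain_component z `<=` chain_component y.
Proof.
move=> yz w [n _]; elim: n w => [|n IH] w /=; first by move=> ->.
case=> [/IH//|[v [Vv [t [vt zt]]] vw]].
exact: chain_component_link Vv vt (IH t zt) _ vw.
Qed.

Lemma chain_component_sym y z : chain_component y z -> chain_component z y.
Proof.
move=> [n _]; elim: n z => [|n IH] z /=; first by move=> ->; exact: chain_component_refl.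
case=> [/IH//|[v [Vv [t [vt yt]]] vz]].
apply: chain_component_trans (IH t yt).
exact: chain_component_link Vv vz (chain_component_refl z) _ vt.
Qed.

Lemma chain_component_eq y z : chain_component y z -> chain_component z = chain_component y.
Proof.
move=> yz; apply/seteqP; split; first exact: chain_component_trans.
exact/chain_component_trans/chain_component_sym.
Qed.

Variable Y : set T.
Hypothesis VY : forall v, V v -> v `<=` Y.

Lemma chain_ball_sub y n : Y y -> chain_ball y n `<=` Y.
Proof.
move=> Yy; elim: n => [|n IH] /=; first by move=> z ->.
by move=> z [/IH//|[v [Vv _] /(VY Vv)]].
Qed.

Lemma chain_component_sub y : Y y -> chain_component y `<=` Y.
Proof. by move=> Yy z [n _]; apply: chain_ball_sub. Qed.

Lemma countable_chain_component y : Y y ->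
  (forall v, V v -> countable v) -> (forall z, Y z -> countable [set v | V v /\ v z]) ->
  countable (chain_component y).
Proof.
move=> Yy Vc Vpc; apply: bigcup_countable => [|n _]; first exact: countableP.
elim: n => [|n IH] /=; first exact: countable1.
apply: countableU => //; apply: (@countable_subset _ _
  (\bigcup_(w in chain_ball y n) \bigcup_(v in [set v | V v /\ v w]) v)).
  by move=> z [v [Vv [w [vw yw]]] vz]; exists w => //; exists v.
apply: bigcup_countable => // w /(chain_ball_sub Yy) Yw.
by apply: bigcup_countable => [|v [Vv _]]; [exact: Vpc | exact: Vc].
Qed.

Lemma chain_component_bigcup y : Y y -> \bigcup_(v in V) v = Y ->
  chain_component y = \bigcup_(v in [set v | V v /\ v `<=` chain_component y]) v.
Proof.
move=> Yy VYE; apply/seteqP; split=> [z yz|z [v [_ vy] /vy //]].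
have [v Vv vz] : (\bigcup_(v in V) v) z by rewrite VYE; exact: chain_component_sub yz.
by exists v => //; split=> //; exact: chain_component_link vz yz.
Qed.

End ChainComponent.

(* [compact_cover] is only available for pointed spaces. *)
Definition pointed_at (X : topologicalType) (x : X) : Type := X.
HB.instance Definition _ (X : topologicalType) (x : X) := Topological.on (pointed_at x).
HB.instance Definition _ (X : topologicalType) (x : X) := isPointed.Build (pointed_at x) x.

Lemma compact_cover_compact (X : topologicalType) (A : set X) :
  compact A -> cover_compact A.
Proof.
have [->|/set0P[x _] cA] := eqVneq A set0; first by move=> _ I D f _ _; exists finmap.fset0.
have : @compact (pointed_at x) A by [].
by rewrite compact_cover.
Qed.

Section CountablePartition.
Variable X : topologicalType.

Definition has_countable_nbhd (x : X) : Prop :=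
  exists G : set X, [/\ open G, G x & countable G].

Lemma open_in_bigcup (Y : set X) (V : set (set X)) :
  (forall v, V v -> open_in Y v) -> open_in Y (\bigcup_(v in V) v).
Proof.
move=> VY; have /choice[W WV] : forall v, exists W, V v -> open W /\ v = W `&` Y.
  move=> v; have [Vv|nVv] := pselect (V v); last by exists set0.
  by have [W] := VY v Vv; exists W.
exists (\bigcup_(v in V) W v); split; first by apply: bigcup_open => v /WV[].
apply/seteqP; split=> [z [v Vv]|z [[v Vv Wvz] Yz]].
  by rewrite (WV v Vv).2 => -[Wz Yz]; split=> //; exists v.
by exists v => //; rewrite (WV v Vv).2.
Qed.

Definition countable_open_partition (Y : set X) (c : X -> set X) : Prop :=
  [/\ forall y, Y y -> c y y, forall y, Y y -> countable (c y),
      forall y, Y y -> c y `<=` Y, forall y z, c y z -> c z = c y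
    & forall y, Y y -> open_in Y (c y)].

Lemma meta_lindelof_partition (Y : set X) : hered_meta_lindelof X ->
  (forall y, Y y -> has_countable_nbhd y) -> exists c, countable_open_partition Y c.
Proof.
move=> hml Ycn.
pose U := [set w | exists G, [/\ open G, countable G & w = G `&` Y]].
have Uo w : U w -> open_in Y w by move=> [G [oG _ ->]]; exists G.
have UY : \bigcup_(w in U) w = Y.
  apply/seteqP; split=> [z [w [G [_ _ ->]] []] //|z Yz].
  by have [G [oG Gz cG]] := Ycn z Yz; exists (G `&` Y) => //; exists G.
have [V [Vo [VYE [VU Vpc]]]] := hml Y U Uo UY.
have VY v : V v -> v `<=` Y by move=> /Vo[W [_ ->]] z [].
have Vc v : V v -> countable v.
  move=> /VU[w [G [_ cG ->]] vw]; apply: countable_subset vw _.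
  by apply: countable_subset cG => z [].
exists (chain_component V); split.
- by move=> y _; exact: chain_component_refl.
- by move=> z Yz; exact: (countable_chain_component VY Yz Vc Vpc).
- by move=> z; exact: (chain_component_sub VY).
- by move=> y z; exact: chain_component_eq.
- move=> z Yz; rewrite (chain_component_bigcup VY Yz VYE).
  by apply: open_in_bigcup => v [/Vo].
Qed.

Lemma partition_compact_finite (Y E : set X) (c : X -> set X) :
  countable_open_partition Y c -> compact E -> E `<=` Y ->
  finite_set [set C | (c @` Y) C /\ C `&` E !=set0].
Proof.
move=> [cc _ _ c_eq c_open] cE EY.
have /choice[W cW] : forall z, exists W, Y z -> open W /\ c z = W `&` Y.
  move=> z; have [Yz|nYz] := pselect (Y z); last by exists set0.
  by have [W] := c_open z Yz; exists W.
have [|z Ez|D' D'E ED'] := compact_cover_compact cE (D := E) (f := W).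
- by move=> z /EY/cW[].
- by exists z => //; have /cW[_ cWz] := EY z Ez; have := cc z (EY z Ez); rewrite cWz => -[].
apply: sub_finite_set (finite_image c (finite_fset D')).
move=> _ [[y Yy <-] [z [yz Ez]]]; have [w D'w Wwz] := ED' z Ez.
have Yw : Y w by apply/EY/set_mem/D'E.
have wz : c w z by rewrite (cW w Yw).2; split=> //; exact: EY.
by exists w => //; rewrite -(c_eq _ _ yz) (c_eq _ _ wz).
Qed.

End CountablePartition.

Lemma calibre_countable_family (T P : Type) (le : P -> P -> Prop) (u : P -> set T)
    (CC : set (set T)) :
  calibre_w1_w le -> (forall p p', le p' p -> u p `<=` u p') ->
  (forall q, finite_set [set C | CC C /\ ~ C `<=` u q]) ->
  (forall C, CC C -> exists p, ~ C `<=` u p) -> countable CC.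
Proof.
move=> cal u_anti fin escape.
have [->|/set0P[C0 /escape[p0 _]]] := eqVneq CC set0; first exact: countable0.
have /choice[g gP] : forall C, exists p, CC C -> ~ C `<=` u p.
  by move=> C; have [/escape[p np]|nC] := pselect (CC C); [exists p | exists p0].
apply: contrapT => ncCC.
have ncg : ~ countable (g @` CC).
  move=> cg; apply/ncCC/(countable_subset _ (bigcup_countable cg
    (fun p _ => finite_set_countable (fin p)))).
  by move=> C CCC; exists (g C); [exists C | split=> //; exact: gP].
have [S [Sg [Sinf [q Sq]]]] := cal _ ncg.
apply/Sinf/(sub_finite_set _ (finite_image g (fin q))) => t St.
have [C CCC gC] := Sg t St; exists C => //; split=> // Cq.
by apply: (gP C CCC); rewrite gC; apply: subset_trans Cq (u_anti _ _ (Sq t St)).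
Qed.

Lemma countable_closed_punctured (X : topologicalType) (P : Type) (le : P -> P -> Prop)
    (u : P -> set X) (x : X) (K : set X) :
  accessible_space X -> hered_meta_lindelof X -> compact [set: X] -> calibre_w1_w le ->
  (forall p, nbhs x (u p)) -> (forall N, nbhs x N -> exists p, u p `<=` N) ->
  (forall p p', le p' p -> u p `<=` u p') ->
  closed K -> (forall y, K y -> y <> x -> has_countable_nbhd y) -> countable K.
Proof.
move=> aX hml cX cal ux ubase u_anti cK Kcn.
pose Y := K `\ x.
have [c cY] := @meta_lindelof_partition _ Y hml (fun y Yy => Kcn y Yy.1 Yy.2).
have [cc ccount cYY _ _] := cY.
have cYc : countable (c @` Y).
  apply: (calibre_countable_family cal u_anti) => [q|_ [y Yy <-]].
    pose E := K `&` ~` interior (u q).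
    have EY : E `<=` Y by move=> z [Kz nuz]; split=> // zx; apply: nuz; rewrite zx; exact: ux.
    have cE : compact E.
      apply: subclosed_compact cX _ => //.
      by apply: closedI => //; apply: open_closedC; exact: open_interior.
    apply: sub_finite_set (partition_compact_finite cY cE EY).
    move=> _ [[y Yy <-] /nonsubset[z [yz nuz]]]; split; first by exists y.
    by exists z; split=> //; split; [exact: (cYY y Yy z yz).1 | move/interior_subset].
  have [p up] : exists p, u p `<=` ~` [set y].
    apply/ubase/open_nbhs_nbhs; split; last by move=> xy; apply: Yy.2; rewrite xy.
    exact/closed_openC/(@accessible_closed_set1 _ aX y).
  by exists p => /(_ y (cc y Yy))/up; apply.
have cUY : countable (\bigcup_(C in c @` Y) C).
  by apply: bigcup_countable cYc _ => _ [y Yy <-]; exact: ccount.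
apply: countable_subset (countableU cUY (countable1 x)) => z Kz.
have [->|zx] := pselect (z = x); [by right | left].
have Yz : Y z by split.
by exists (c z); [exists z | exact: cc z Yz].
Qed.

Lemma has_countable_nbhd_everywhere (X : topologicalType) (P : Type) (le : P -> P -> Prop) :
  hausdorff_space X -> hered_meta_lindelof X -> compact [set: X] -> scattered X ->
  calibre_w1_w le -> has_Pbase X le -> forall x : X, has_countable_nbhd x.
Proof.
move=> hX hml cX sc cal [U hU] z0; apply: contrapT => nz.
pose B := [set z : X | ~ has_countable_nbhd z].
have [x [Bx [G [oG GB]]]] := sc B (ex_intro _ z0 nz).
have Gx : G x by have : [set x] x by []; rewrite -GB => -[].
have [N Nx NG] : filter_from (nbhs x) closure G.
  by apply: (compact_regular (x := x) hX cX filterT); apply: open_nbhs_nbhs.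
have [Ux [Ubase Uanti]] := hU x.
have Kcn y : closure N y -> y <> x -> has_countable_nbhd y.
  move=> /NG Gy yx; apply: contrapT => ny.
  by have : (G `&` B) y by []; rewrite GB.
have cK := countable_closed_punctured (hausdorff_accessible hX) hml cX cal Ux Ubase Uanti
  (@closed_closure _ N) Kcn.
apply: Bx; exists (interior N); split; [exact: open_interior | exact: Nx |].
by apply: countable_subset cK => z /interior_subset; exact: subset_closure.
Qed.

Lemma countable_compact_locally_countable (X : topologicalType) :
  compact [set: X] -> (forall x : X, has_countable_nbhd x) -> countable [set: X].
Proof.
move=> cX /choice[G hG].
have [|z _|D' _ cov] := compact_cover_compact cX (D := [set: X]) (f := G).
- by move=> z _; have [] := hG z.
- by exists z => //; have [] := hG z.
apply: countable_subset cov _; apply: bigcup_countable => [|z _]; first exact: countable_fset.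
by have [] := hG z.
Qed.

Lemma countable_avoids_itv01 (R : realType) (A : set R) :
  countable A -> exists r : R, [/\ (0 < r)%R, (r < 1)%R & ~ A r].
Proof.
move=> cA; apply: contrapT => nr.
have sub : `]0%R, 1%R[%classic `<=` A.
  move=> r /=; rewrite in_itv /= => /andP[r0 r1]; apply: contrapT => nAr.
  by apply: nr; exists r.
have := countable_lebesgue_measure0 (countable_subset sub cA).
rewrite lebesgue_measure_itv /= lte_fin ltr01 oppr0 adde0 => -[] /eqP.
by rewrite oner_eq0.
Qed.

Lemma clopen_separation (X : topologicalType) : tychonoff_space X -> countable [set: X] ->
  forall a b : X, a <> b -> exists C : set X, [/\ open C, closed C, C a & ~ C b].
Proof.
move=> [hX creg] cX a b ab.
have [f [cf [fa fb]]] := creg [set b] a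
  (@accessible_closed_set1 X (hausdorff_accessible hX) b) ab.
have [r [r0 r1 nfr]] := countable_avoids_itv01 (sub_countable (card_image_le f setT) cX).
have f_open (S : set Rdefinitions.R) : open S -> open (f @^-1` S).
  by move=> oS; apply: open_comp => // z _; exact: cf.
exists (f @^-1` [set s | (s < r)%R]); split.
- exact/f_open/open_lt.
- have -> : f @^-1` [set s | (s < r)%R] = ~` (f @^-1` [set s | (r < s)%R]).
    apply/seteqP; split=> z /=; first by move=> fr rf; have := lt_trans fr rf; rewrite ltxx.
    move=> nrf; have : f z != r by apply/eqP => fzr; apply: nfr; exists z.
    by rewrite neq_lt => /orP[//|/nrf].
  exact/open_closedC/f_open/open_gt.
- by rewrite /= fa.
- by rewrite /= fb // => /(lt_trans r1); rewrite ltxx.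
Qed.

Lemma clopen_separating_sequence (X : topologicalType) : countable [set: X] ->
  (forall a b : X, a <> b -> exists C : set X, [/\ open C, closed C, C a & ~ C b]) ->
  exists Cn : nat -> set X, (forall n, open (Cn n) /\ closed (Cn n)) /\
    (forall a b, a <> b -> exists n, Cn n a /\ ~ Cn n b).
Proof.
move=> cX sep.
have /countable_injP[idx idx_inj] : countable [set: X * X].
  by rewrite -setXTT; exact: countableX.
have /choice[Cn CnP] : forall n, exists C : set X, (open C /\ closed C) /\
    forall a b, a <> b -> idx (a, b) = n -> C a /\ ~ C b.
  move=> n; have [[a [b [ab <-]]]|none] := pselect (exists a b, a <> b /\ idx (a, b) = n).
    have [C [oC cC Ca nCb]] := sep a b ab; exists C; split=> // a' b' _.
    by move=> /idx_inj; rewrite !inE => /(_ I I) [-> ->].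
  exists setT; split; first by split; [exact: openT | exact: closedT].
  by move=> a b ab e; exfalso; apply: none; exists a, b.
exists Cn; split=> [n|a b ab]; first exact: (CnP n).1.
by exists (idx (a, b)); exact: (CnP _).2 a b ab erefl.
Qed.

Lemma clopen_agree (X : topologicalType) (C : set X) (x : X) : open C -> closed C ->
  open [set y | C x <-> C y] /\ closed [set y | C x <-> C y].
Proof.
move=> oC cC; have [Cx|nCx] := pselect (C x).
  by have -> : [set y | C x <-> C y] = C by apply/seteqP; split=> y /=; tauto.
have -> : [set y | C x <-> C y] = ~` C by apply/seteqP; split=> y /=; tauto.
by split; [exact: closed_openC | exact: open_closedC].
Qed.

Section SeparatingSequence.
Variables (X : topologicalType) (Cn : nat -> set X).
Local Open Scope ring_scope.

Definition separates (n : nat) (a b : X) : Prop := ~ (Cn n a <-> Cn n b).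

Definition first_separator (a b : X) : nat :=
  if pselect (exists n, `[< separates n a b >]) is left h then ex_minn h else 0.

Lemma first_separatorP n a b : separates n a b ->
  separates (first_separator a b) a b /\ (first_separator a b <= n)%N.
Proof.
move=> sn; rewrite /first_separator.
case: pselect => [h|[]]; last by exists n; exact/asboolP.
by case: ex_minnP => m /asboolP sm mmin; split=> //; apply/mmin/asboolP.
Qed.

Definition sep_dist (a b : X) : Rdefinitions.R :=
  if `[< exists n, separates n a b >] then ((first_separator a b).+1%:R)^-1 else 0.

Lemma sep_distE n a b : separates n a b ->
  sep_dist a b = ((first_separator a b).+1%:R)^-1.
Proof. by move=> sn; rewrite /sep_dist; case: asboolP => // -[]; exists n. Qed.

Lemma sep_dist_eq0 a b : (forall n, ~ separates n a b) -> sep_dist a b = 0.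
Proof. by move=> nsep; rewrite /sep_dist; case: asboolP => // -[n /nsep]. Qed.

Lemma sep_dist_ge0 a b : 0 <= sep_dist a b.
Proof. by rewrite /sep_dist; case: asboolP. Qed.

Lemma sep_dist_ge n a b : separates n a b -> (n.+1%:R)^-1 <= sep_dist a b.
Proof.
move=> sn; rewrite (sep_distE sn) lef_pV2 ?posrE // ler_nat ltnS.
exact: (first_separatorP sn).2.
Qed.

Lemma separatesC n a b : separates n a b -> separates n b a.
Proof. by rewrite /separates; tauto. Qed.

Lemma sep_distC a b : sep_dist a b = sep_dist b a.
Proof.
have [[n sn]|nsep] := pselect (exists n, separates n a b); last first.
  by rewrite !sep_dist_eq0 // => n sn; apply: nsep; exists n; by [|exact: separatesC].
have sn' := separatesC sn.
apply/eqP; rewrite eq_le; apply/andP; split.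
  by rewrite (sep_distE sn); apply/sep_dist_ge/separatesC/(first_separatorP sn).1.
by rewrite (sep_distE sn'); apply/sep_dist_ge/separatesC/(first_separatorP sn').1.
Qed.

Lemma sep_dist_le_max a b c : sep_dist a c <= Num.max (sep_dist a b) (sep_dist b c).
Proof.
have [[n sn]|nsep] := pselect (exists n, separates n a c); last first.
  by rewrite sep_dist_eq0 ?le_max ?sep_dist_ge0 // => n sn; apply: nsep; exists n.
have [sm _] := first_separatorP sn; rewrite (sep_distE sn) le_max.
have [sab|nab] := pselect (separates (first_separator a c) a b).
  by rewrite sep_dist_ge.
have sbc : separates (first_separator a c) b c by move: sm nab; rewrite /separates; tauto.
by rewrite (sep_dist_ge sbc) orbT.
Qed.

Lemma sep_dist_triangle a b c : sep_dist a c <= sep_dist a b + sep_dist b c.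
Proof.
apply: le_trans (sep_dist_le_max a b c) _.
by rewrite ge_max lerDl lerDr !sep_dist_ge0.
Qed.

Lemma sep_dist_lt N x y :
  sep_dist x y < (N.+1%:R)^-1 <-> forall n, (n <= N)%N -> (Cn n x <-> Cn n y).
Proof.
split=> [lt_xy n nN|agree].
  apply: contrapT => sn; have := le_lt_trans (sep_dist_ge sn) lt_xy.
  by rewrite ltf_pV2 ?posrE // ltr_nat ltnS ltnNge nN.
have [[n sn]|nsep] := pselect (exists n, separates n x y); last first.
  by rewrite sep_dist_eq0 ?invr_gt0 // => n sn; apply: nsep; exists n.
have [sm _] := first_separatorP sn; rewrite (sep_distE sn) ltf_pV2 ?posrE // ltr_nat ltnS.
by rewrite ltnNge; apply/negP => /agree.
Qed.

Hypothesis Cn_clopen : forall n, open (Cn n) /\ closed (Cn n).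
Hypothesis Cn_separating : forall a b, a <> b -> exists n, Cn n a /\ ~ Cn n b.

Lemma sep_dist_eq0P a b : sep_dist a b = 0 <-> a = b.
Proof.
split=> [d0|->]; last by rewrite sep_dist_eq0 // => n; apply; split.
apply: contrapT => ab; have [n [Ca nCb]] := Cn_separating ab.
have sn : separates n a b by case=> /(_ Ca).
by move: d0; rewrite (sep_distE sn) => /eqP; rewrite invr_eq0 pnatr_eq0.
Qed.

Lemma open_agree_upto N x : open [set y | forall n, (n <= N)%N -> (Cn n x <-> Cn n y)].
Proof.
elim: N => [|N IH].
  have -> : [set y | forall n, (n <= 0)%N -> (Cn n x <-> Cn n y)] =
      [set y | Cn 0 x <-> Cn 0 y].
    apply/seteqP; split=> y /= agree => [|n]; first exact: agree.
    by rewrite leqn0 => /eqP ->.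
  exact: (clopen_agree x (Cn_clopen 0).1 (Cn_clopen 0).2).1.
have -> : [set y | forall n, (n <= N.+1)%N -> (Cn n x <-> Cn n y)] =
    [set y | forall n, (n <= N)%N -> (Cn n x <-> Cn n y)] `&`
    [set y | Cn N.+1 x <-> Cn N.+1 y].
  apply/seteqP; split=> y /=; first by move=> agree; split=> [n /leqW|]; exact: agree.
  move=> [agree agreeS] n; rewrite leq_eqVlt => /orP[/eqP ->|]; first exact: agreeS.
  exact: agree.
exact/openI/(clopen_agree x (Cn_clopen _).1 (Cn_clopen _).2).1.
Qed.

Lemma separating_metrizable : compact [set: X] -> metrizable_space X.
Proof.
move=> cX; exists sep_dist; split; first by move=> a b; apply/RleP/sep_dist_ge0.
split; first exact: sep_dist_eq0P.
split; first exact: sep_distC.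
split; first by move=> a b c; apply/RleP/sep_dist_triangle.
move=> A; split=> [oA x Ax|Aball].
  have cAc : compact (~` A) by exact: subclosed_compact (open_closedC oA) cX _.
  have [n _|y nAy|D' _ cov] := compact_cover_compact cAc (D := [set: nat])
      (f := fun n => [set y | separates n x y]).
  - exact/closed_openC/(clopen_agree x (Cn_clopen n).1 (Cn_clopen n).2).2.
  - have [|n [Cx nCy]] := Cn_separating (a := x) (b := y).
      by move=> xy; apply: nAy; rewrite -xy.
    by exists n => // -[/(_ Cx)].
  exists ((\max_(n <- finmap.enum_fset D') n).+1%:R)^-1.
  split; first by apply/RltP; rewrite invr_gt0.
  move=> y /RltP/sep_dist_lt agree; apply: contrapT => nAy.
  have [n D'n sn] := cov y nAy; apply/sn/agree.
  exact: leq_bigmax_seq.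
rewrite openE => x Ax; have [e [/RltP e0 ball_A]] := Aball x Ax.
have [N _ /(_ N (leqnn N)) Ne] := near_infty_natSinv_lt (PosNum e0).
apply: filterS (open_nbhs_nbhs (conj (open_agree_upto N x) _)); last by [].
by move=> y /sep_dist_lt xy; apply/ball_A/RltP; exact: lt_trans xy Ne.
Qed.

End SeparatingSequence.

Theorem mainTheorem13 (X : topologicalType) :
  tychonoff_space X -> hered_meta_lindelof X -> compact [set: X] -> scattered X ->
  countable_height X ->
  forall (P : Type) (le : P -> P -> Prop),
    directed_set le -> calibre_w1_w le -> has_Pbase X le ->
  countable [set: X] /\ metrizable_space X.
Proof.
move=> tX hml cX sc _ P le _ cal Pbase.
have cntX : countable [set: X].
  apply: (countable_compact_locally_countable cX).
  exact: (has_countable_nbhd_everywhere tX.1 hml cX sc cal Pbase).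
split=> //.
have [Cn [Cn_clopen Cn_sep]] := clopen_separating_sequence cntX (clopen_separation tX cntX).
exact: (separating_metrizable Cn_clopen Cn_sep cX).
Qed.
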